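(* Let an $[[n,k,d;c]]$ EAQEC code be given by a simplified stabilizer group $\mathcal S'=\langle g'_1,\dots,g'_{n-k},h'_1,\dots,h'_c\rangle$ on Alice's $n$ qubits, with isotropic subgroup $\mathcal S_I=\langle g'_{c+1},\dots,g'_{n-k}\rangle$, and let $T$ be a set of syndrome representatives consisting of Pauli operators acting on Alice's qubits only. Over the channel $\mathcal N_A\otimes I_B$, where $\mathcal N_A$ is the depolarizing channel with rate $p_a$ on each of Alice's $n$ qubits and Bob's qubits suffer no error, the channel fidelity is \[ F_C\big(\mathcal D(\mathcal N_A\otimes I_B)\mathcal U\big)=\sum_{w=0}^n b_w q_w, \] where $b_w$ is the number of elements of $T\times\mathcal S_I=\{hg:h\in T,g\in\mathcal S_I\}$ of weight $w$ and $q_w=(1-\frac34p_a)^{n-w}(\frac14p_a)^w$; i.e. it is the weight enumerator of $T\times\mathcal S_I$, a polynomial in $\{q_w\}$.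
   Context: Pauli operators are tensor products of $I,X,Y,Z$ (up to phase); weight is the number of non-identity factors. In the EAQEC code, $g'_i$ and $h'_i$ anticommute for $i\le c$ and all other pairs of generators of $\mathcal S'$ commute. Alice and Bob share $c$ Bell pairs; after Alice's Clifford encoding, the $(n+c)$-qubit encoded state is stabilized by $\mathcal S=\langle g'_i\otimes Z_i,\ h'_i\otimes X_i\ (i\le c),\ g'_j\otimes I\ (j>c)\rangle$ (the $Z_i,X_i$ act on Bob's $i$-th qubit), so the scheme is an $[[n+c,k]]$ stabilizer code with Clifford encoder $U_E$. The syndrome of an error records which generators of $\mathcal S$ it anticommutes with (for an error $E_A\otimes I$ this is the pattern of anticommutation of $E_A$ with the generators of $\mathcal S'$); $T$ contains, for each of the $2^{n-k+c}$ syndromes $s$, one operator $E_s\otimes I$ with syndrome $s$ ($E_0=I$), and $C_s=E_s\otimes I$. Encoding $\mathcal U(\rho)=U_E(\rho\otimes|0\rangle\langle0|)U_E^\dagger$; decoding $\mathcal D(\rho')=\mathrm{tr}_{\mathrm{anc}}\big(\sum_sU_E^\dagger C_sP_s\rho'P_sC_s^\dagger U_E\big)$ with $P_s$ the syndrome projectors. Channel fidelity of a channel with Kraus operators $\{K_i\}$ on an $m$-dimensional space: $F_C=\frac1{m^2}\sum_i|\mathrm{tr}K_i|^2$. The one-qubit depolarizing channel with rate $p$ is $\rho\mapsto(1-\frac34p)\rho+\frac p4(X\rho X+Y\rho Y+Z\rho Z)$. *)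

(* Quantum objects are modelled concretely:
   operators on m qubits are matrices indexed by the computational basis
   {ffun 'I_m -> bool} (via enum_val), over an abstract numeric closed field
   C (e.g. algC, or complex numbers over a real closed field). *)
From HB Require Import structures.
From mathcomp Require Import all_boot all_order all_algebra.
Set Implicit Arguments. Unset Strict Implicit. Unset Printing Implicit Defensive.
Import Order.TTheory GRing.Theory Num.Theory.
Local Open Scope ring_scope.

Definition qb (m : nat) : finType := {ffun 'I_m -> bool}.
(* single-qubit Pauli letter (x,z): I=(0,0), X=(1,0), Z=(0,1), Y=(1,1) *)
Definition letter : finType := (bool * bool)%type.
Definition pI : letter := (false, false).
Definition pX : letter := (true, false).
Definition pZ : letter := (false, true).
(* n-qubit Pauli operator up to phase = tensor product of letters *)
Definition pauli (m : nat) : finType := {ffun 'I_m -> letter}.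
Definition pid (m : nat) : pauli m := [ffun => pI].
Definition pmul (m : nat) (P Q : pauli m) : pauli m :=
  [ffun i => ((P i).1 (+) (Q i).1, (P i).2 (+) (Q i).2)].
Definition weight (m : nat) (P : pauli m) : nat := #|[set i | P i != pI]|.
Definition anticomm (m : nat) (P Q : pauli m) : bool :=
  odd #|[set i | ((P i).1 && (Q i).2) (+) ((P i).2 && (Q i).1)]|.
(* tensor product P (x) Q, P on the first n qubits (Alice), Q on the last c (Bob) *)
Definition pcat (n c : nat) (P : pauli n) (Q : pauli c) : pauli (n + c) :=
  [ffun i => match split i with inl a => P a | inr b => Q b end].
Definition pprod (m : nat) (I : finType) (g : I -> pauli m) (J : {set I}) : pauli m :=
  \big[@pmul m / pid m]_(i in J) g i.
Definition bob1 (c : nat) (j : 'I_c) (a : letter) : pauli c :=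
  [ffun b => if b == j then a else pI].

Section Mat.
Variable C : numClosedFieldType.

Definition sigma (a : letter) (x y : bool) : C :=
  match a with
  | (false, false) => (x == y)%:R
  | (true, false) => (x != y)%:R
  | (false, true) => if x == y then (if x then -1 else 1) else 0
  | (true, true) => if x == y then 0 else if y then - 'i else 'i
  end.

Definition mk (A B : finType) (f : A -> B -> C) : 'M[C]_(#|A|, #|B|) :=
  \matrix_(i, j) f (enum_val i) (enum_val j).

Definition pent (m : nat) (P : pauli m) (x y : qb m) : C :=
  \prod_i sigma (P i) (x i) (y i).
Definition pmat (m : nat) (P : pauli m) : 'M[C]_(#|qb m|) := mk (@pent m P).
Definition smat (m : nat) (bP : bool * pauli m) : 'M[C]_(#|qb m|) :=
  (-1) ^+ bP.1 *: pmat bP.2.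

Definition adj (p q : nat) (A : 'M[C]_(p, q)) : 'M[C]_(q, p) :=
  map_mx (fun x => x^*) A^T.

(* input space of the encoder: k logical qubits (x) r ancilla qubits *)
Definition In (k r : nat) : finType := (qb k * qb r)%type.
Definition qzero (r : nat) : qb r := [ffun => false].
Definition pmatIn (k r : nat) (P1 : pauli k) (P2 : pauli r) : 'M[C]_(#|In k r|) :=
  mk (fun (x y : In k r) => pent P1 x.1 y.1 * pent P2 x.2 y.2).
(* |psi> |-> |psi> (x) |0...0> *)
Definition emb (k r : nat) : 'M[C]_(#|In k r|, #|qb k|) :=
  mk (fun (x : In k r) (y : qb k) => ((x.1 == y) && (x.2 == qzero r))%:R).
(* Kraus operator <a|_anc of the partial trace over the ancillas *)
Definition projA (k r : nat) (a : qb r) : 'M[C]_(#|qb k|, #|In k r|) :=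
  mk (fun (y : qb k) (x : In k r) => ((x.1 == y) && (x.2 == a))%:R).

Definition unitary (p q : nat) (U : 'M[C]_(p, q)) : Prop :=
  adj U *m U = 1%:M /\ U *m adj U = 1%:M.
Definition clifford (k r m : nat) (U : 'M[C]_(#|qb m|, #|In k r|)) : Prop :=
  forall (P1 : pauli k) (P2 : pauli r),
    exists (ph : C) (Q : pauli m), U *m pmatIn P1 P2 *m adj U = ph *: pmat Q.

Definition chan_fid (I : finType) (d : nat) (K : I -> 'M[C]_d) : C :=
  (d%:R ^+ 2)^-1 * \sum_i `|\tr (K i)| ^+ 2.

(* one-qubit depolarizing channel with rate p:
   rho |-> (1 - 3p/4) rho + p/4 (X rho X + Y rho Y + Z rho Z);
   Kraus operators sqrt(dep_w p a) sigma_a *)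
Definition dep_w (p : C) (a : letter) : C :=
  if a == pI then 1 - 3%:R / 4%:R * p else p / 4%:R.
(* Kraus operators of N_A (x) I_B: depolarizing on each of Alice's n qubits,
   identity on Bob's c qubits; indexed by Pauli strings E on Alice's qubits *)
Definition depAB (n c : nat) (p : C) (E : pauli n) : 'M[C]_(#|qb (n + c)|) :=
  (\prod_i sqrtC (dep_w p (E i))) *: pmat (pcat E (pid c)).

(* generators of S': g'_1..g'_{n-k} indexed by inl, h'_1..h'_c by inr *)
Definition gidx (n k c : nat) : finType := ('I_(n - k) + 'I_c)%type.
Definition synd (n k c : nat) : finType := {ffun gidx n k c -> bool}.

Definition Sp_gen (n k c : nat) (gp : 'I_(n - k) -> bool * pauli n)
  (hp : 'I_c -> bool * pauli n) (j : gidx n k c) : bool * pauli n :=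
  match j with inl i => gp i | inr i => hp i end.

(* generators of S on n + c qubits:
   g'_i (x) Z_i, h'_i (x) X_i (i <= c), g'_j (x) I (j > c) *)
Definition S_gen (n k c : nat) (gp : 'I_(n - k) -> bool * pauli n)
  (hp : 'I_c -> bool * pauli n) (j : gidx n k c) : bool * pauli (n + c) :=
  match j with
  | inl i => ((gp i).1, pcat (gp i).2
                 [ffun b : 'I_c => if val b == val i then pZ else pI])
  | inr i => ((hp i).1, pcat (hp i).2 (bob1 i pX))
  end.

Definition syndrome (n k c : nat) (gp : 'I_(n - k) -> bool * pauli n)
  (hp : 'I_c -> bool * pauli n) (E : pauli n) : synd n k c :=
  [ffun j => anticomm E (Sp_gen gp hp j).2].

Definition synproj (n k c : nat) (gp : 'I_(n - k) -> bool * pauli n)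
  (hp : 'I_c -> bool * pauli n) (s : synd n k c) : 'M[C]_(#|qb (n + c)|) :=
  \big[mulmx / 1%:M]_(j : gidx n k c)
     ((2%:R)^-1 *: (1%:M + (-1) ^+ (s j) *: smat (S_gen gp hp j))).

(* Kraus operators of D o (N_A (x) I_B) o U, indexed by the error E of N_A,
   the syndrome s and the ancilla basis state a of the partial trace:
   <a| U_E^dag C_s P_s (K_E) U_E (. (x) |0>) *)
Definition code_kraus (n k c : nat) (p : C) (gp : 'I_(n - k) -> bool * pauli n)
  (hp : 'I_c -> bool * pauli n)
  (U : 'M[C]_(#|qb (n + c)|, #|In k (n - k + c)|))
  (Ef : synd n k c -> pauli n)
  (esa : pauli n * synd n k c * qb (n - k + c)) : 'M[C]_(#|qb k|) :=
  let: (E, s, a) := esa in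
  projA k a *m adj U *m pmat (pcat (Ef s) (pid c)) *m synproj gp hp s
    *m depAB c p E *m U *m emb k (n - k + c).

Definition qw (n : nat) (p : C) (w : nat) : C :=
  (1 - 3%:R / 4%:R * p) ^+ (n - w) * (p / 4%:R) ^+ w.

End Mat.

(* isotropic subgroup S_I = < g'_{c+1}, ..., g'_{n-k} > (elements up to phase) *)
Definition S_I (n k c : nat) (gp : 'I_(n - k) -> bool * pauli n) : {set pauli n} :=
  [set pprod (fun i => (gp i).2) J |
     J in [set J : {set 'I_(n - k)} | [forall i in J, (c <= i)%N]]].
Definition Tset (n k c : nat) (Ef : synd n k c -> pauli n) : {set pauli n} :=
  [set Ef s | s : synd n k c].
Definition TxSI (n k c : nat) (gp : 'I_(n - k) -> bool * pauli n)
  (Ef : synd n k c -> pauli n) : {set pauli n} :=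
  [set pmul h g | h in Tset Ef, g in S_I c gp].
Definition bw (n k c : nat) (gp : 'I_(n - k) -> bool * pauli n)
  (Ef : synd n k c -> pauli n) (w : nat) : nat :=
  #|[set P in TxSI gp Ef | weight P == w]|.

From HB Require Import structures.
From mathcomp Require Import all_boot all_order all_algebra.
From mathcomp Require Import ring.
Set Implicit Arguments. Unset Strict Implicit. Unset Printing Implicit Defensive.
Import Order.TTheory GRing.Theory Num.Theory.
Local Open Scope ring_scope.

(* Let V = U_E (. (x) |0>) be the encoding isometry and P_0 the projector onto
   syndrome 0.  Since S stabilizes V, P_0 V = V; expanding
   P_0 = 2^-(n-k+c) sum_(g in S) g and using the independence of the generators
   gives tr (P_0^dag P_0) = 2^k = tr (V V^dag), which forces P_0 = V V^dag.
   For the Kraus operator with error E, syndrome s and ancilla state a, the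
   syndrome projector kills E V unless s is the syndrome of E, the partial trace
   kills it unless a = 0, and what remains has trace
   alpha_E tr (V^dag E_s E V) = alpha_E tr (E_s E P_0).  That trace has modulus
   2^k when E_s E (x) I lies in S, i.e. (Bob's part being trivial) when
   E_s E lies in S_I, i.e. when E lies in T x S_I, and vanishes otherwise.
   Summing |alpha_E|^2 = q_(wt E) over these E gives the weight enumerator. *)

(** * The Pauli group up to phase *)

Definition symp (a b : letter) : bool := (a.1 && b.2) (+) (a.2 && b.1).

Lemma odd_card_setE (I : finType) (f : pred I) :
  odd #|[set i | f i]| = \big[addb/false]_i f i.
Proof.
rewrite cardsE -sum1_card big_mkcond /=.
apply: (big_rec2 (fun n b => odd n = b)) => // i b n _ <-.
have -> : (i \in f) = f i by [].
by rewrite oddD; case: (f i).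
Qed.

Section PauliGroup.
Variable m : nat.
Implicit Types P Q R : pauli m.

Lemma pmulA : associative (@pmul m).
Proof. by move=> P Q R; apply/ffunP=> i; rewrite !ffunE /= !addbA. Qed.

Lemma pmulC : commutative (@pmul m).
Proof. by move=> P Q; apply/ffunP=> i; rewrite !ffunE /= addbC [(Q i).2 (+) _]addbC. Qed.

Lemma pmul1p : left_id (pid m) (@pmul m).
Proof. by move=> P; apply/ffunP=> i; rewrite !ffunE /=; case: (P i). Qed.

Lemma pmulp1 : right_id (pid m) (@pmul m).
Proof. by move=> P; rewrite pmulC pmul1p. Qed.

Lemma pmulpp P : pmul P P = pid m.
Proof. by apply/ffunP=> i; rewrite !ffunE /= !addbb. Qed.

HB.instance Definition _ := Monoid.isComLaw.Build (pauli m) (pid m) (@pmul m)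
  pmulA pmulC pmul1p.

Lemma pmul_eq_pid P Q : (pmul P Q == pid m) = (P == Q).
Proof.
apply/eqP/eqP=> [PQ1|->]; last exact: pmulpp.
by rewrite -[Q]pmul1p -PQ1 -pmulA pmulpp pmulp1.
Qed.

Lemma pprod_mkcond (I : finType) (g : I -> pauli m) (d : pred I) :
  pprod g [set i | d i] = \big[@pmul m/pid m]_i (if d i then g i else pid m).
Proof. by rewrite /pprod big_mkcond; apply: eq_bigr => i _; rewrite inE. Qed.

Lemma bigpmulE (I : finType) (X : I -> pauli m) t :
  (\big[@pmul m/pid m]_i X i) t =
  (\big[addb/false]_i (X i t).1, \big[addb/false]_i (X i t).2).
Proof.
apply: (big_rec3 (fun (P : pauli m) x z => P t = (x, z))); first by rewrite ffunE.
by move=> i P x z _ e; rewrite ffunE e.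
Qed.

Lemma anticommE P Q : anticomm P Q = \big[addb/false]_i symp (P i) (Q i).
Proof. exact: odd_card_setE. Qed.

Lemma anticommC P Q : anticomm P Q = anticomm Q P.
Proof.
rewrite !anticommE; apply: eq_bigr => i _.
by rewrite /symp addbC andbC [_.2 && _]andbC.
Qed.

Lemma anticommMl P Q R : anticomm (pmul P Q) R = anticomm P R (+) anticomm Q R.
Proof.
rewrite !anticommE -big_split /=; apply: eq_bigr => i _; rewrite /symp ffunE /=.
by case: (P i) => [[] []]; case: (Q i) => [[] []]; case: (R i) => [[] []].
Qed.

Lemma anticomm_pidl P : anticomm (pid m) P = false.
Proof. by rewrite anticommE big1 // => i _; rewrite ffunE. Qed.

Lemma anticomm_pprod (I : finType) (g : I -> pauli m) (J : {set I}) P :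
  anticomm (pprod g J) P = \big[addb/false]_(i in J) anticomm (g i) P.
Proof.
apply: (big_rec2 (fun (Q : pauli m) b => anticomm Q P = b)); first exact: anticomm_pidl.
by move=> i Q b _ <-; rewrite anticommMl.
Qed.

End PauliGroup.

Section PauliCat.
Variables n c : nat.
Implicit Types (P : pauli n) (Q : pauli c).

Lemma pcatEl P Q (i : 'I_n) : pcat P Q (lshift c i) = P i.
Proof. by rewrite ffunE; have /= -> := @unsplitK n c (inl i). Qed.

Lemma pcatEr P Q (i : 'I_c) : pcat P Q (rshift n i) = Q i.
Proof. by rewrite ffunE; have /= -> := @unsplitK n c (inr i). Qed.

Lemma pcat_inj P P' Q Q' : pcat P Q = pcat P' Q' -> P = P' /\ Q = Q'.
Proof.
move=> eqPQ; split; apply/ffunP=> i.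
  by rewrite -(pcatEl P Q) eqPQ pcatEl.
by rewrite -(pcatEr P Q) eqPQ pcatEr.
Qed.

Lemma pcatM P P' Q Q' : pmul (pcat P Q) (pcat P' Q') = pcat (pmul P P') (pmul Q Q').
Proof. by apply/ffunP=> i; rewrite !ffunE; case: split => j; rewrite !ffunE. Qed.

Lemma pcat_pid : pcat (pid n) (pid c) = pid (n + c).
Proof. by apply/ffunP=> i; rewrite !ffunE; case: split => j; rewrite !ffunE. Qed.

Lemma pcat_bigpmul (I : finType) (a : I -> pauli n) (b : I -> pauli c) :
  \big[@pmul _/pid _]_i pcat (a i) (b i) =
  pcat (\big[@pmul _/pid _]_i a i) (\big[@pmul _/pid _]_i b i).
Proof.
apply: (big_rec3 (fun x y z => x = pcat y z)); first by rewrite pcat_pid.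
by move=> i x y z _ ->; rewrite pcatM.
Qed.

Lemma anticomm_pcat P P' Q Q' :
  anticomm (pcat P Q) (pcat P' Q') = anticomm P P' (+) anticomm Q Q'.
Proof.
rewrite !anticommE big_split_ord /=.
by congr (_ (+) _); apply: eq_bigr => i _; rewrite ?pcatEl ?pcatEr.
Qed.

End PauliCat.

(** * Pauli matrices *)

Lemma sum_enum_val (R : nmodType) (T : finType) (F : T -> R) :
  \sum_(i < #|T|) F (enum_val i) = \sum_x F x.
Proof. by rewrite (big_enum_val F). Qed.

Section PauliMatrices.
Variable C : numClosedFieldType.

(* [sigma a * sigma b = sigma_phase a b * sigma (a b)], from XY = iZ, YZ = iX,
   ZX = iY and the anticommutation of distinct Paulis. *)
Definition sigma_phase (a b : letter) : C :=
  match a, b with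
  | (true, false), (false, true) | (true, true), (true, false)
  | (false, true), (true, true) => - 'i
  | (false, true), (true, false) | (true, false), (true, true)
  | (true, true), (false, true) => 'i
  | _, _ => 1
  end.

Definition pauli_phase m (P Q : pauli m) : C := \prod_i sigma_phase (P i) (Q i).

Lemma sigma_mul a b x y :
  \sum_(z : bool) sigma C a x z * sigma C b z y =
  sigma_phase a b * sigma C (a.1 (+) b.1, a.2 (+) b.2) x y.
Proof.
rewrite big_bool.
case: a => [[] []]; case: b => [[] []]; case: x; case: y => /=;
  rewrite ?(mul0r, mulr0, mul1r, mulr1, addr0, add0r, mulrN, mulNr, opprK, mulCii) //.
Qed.

Lemma sigma_conj a x y : (sigma C a y x)^* = sigma C a x y.
Proof.
case: a => [[] []]; case: x; case: y => /=;
  rewrite ?(conjCi, rmorph1, rmorph0, conjC_nat) //;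
  by rewrite rmorphN /= ?conjCi ?rmorph1 ?opprK.
Qed.

Lemma sigma_tr a : \sum_(b : bool) sigma C a b b = (a == pI)%:R * 2%:R.
Proof.
by rewrite big_bool; case: a => [[] []] /=;
  rewrite ?(eqxx, addr0, add0r, mul1r, mul0r, subrr, addNr).
Qed.

Lemma normr_sigma_phase a b : `|sigma_phase a b| = 1.
Proof. by case: a => [[] []]; case: b => [[] []]; rewrite /= ?normrN ?normCi ?normr1. Qed.

Lemma sigma_phaseC a b : sigma_phase a b = (-1) ^+ symp a b * sigma_phase b a.
Proof.
by case: a => [[] []]; case: b => [[] []]; rewrite /= ?expr0 ?expr1 ?mul1r ?mulN1r ?opprK.
Qed.

Variable m : nat.
Implicit Types P Q : pauli m.

Lemma pmatE P i j : pmat C P i j = pent C P (enum_val i) (enum_val j).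
Proof. by rewrite mxE. Qed.

Lemma card_qb : #|qb m|%:R = 2%:R ^+ m :> C.
Proof. by rewrite card_ffun card_bool card_ord natrX. Qed.

Lemma pmatM P Q : pmat C P *m pmat C Q = pauli_phase P Q *: pmat C (pmul P Q).
Proof.
apply/matrixP=> i j; rewrite !mxE.
under eq_bigr do rewrite !pmatE.
rewrite (sum_enum_val (fun z => pent C P (enum_val i) z * pent C Q z (enum_val j))).
move: (enum_val i) (enum_val j) => x y.
transitivity (\prod_t \sum_(b : bool) sigma C (P t) (x t) b * sigma C (Q t) b (y t)).
  by rewrite bigA_distr_bigA /=; apply: eq_bigr => z _; rewrite /pent -big_split.
rewrite /pauli_phase /pent -big_split /=; apply: eq_bigr => t _.
by rewrite sigma_mul ffunE.
Qed.

Lemma pmat_tr P : \tr (pmat C P) = (P == pid m)%:R * 2%:R ^+ m.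
Proof.
rewrite /mxtrace; under eq_bigr do rewrite pmatE.
rewrite (sum_enum_val (fun z => pent C P z z)).
transitivity (\prod_t \sum_(b : bool) sigma C (P t) b b); first by rewrite bigA_distr_bigA.
under eq_bigr do rewrite sigma_tr.
have [->|P1] := eqVneq P (pid m).
  under eq_bigr do rewrite ffunE eqxx mul1r.
  by rewrite prodr_const card_ord mul1r.
have [t Pt] : exists t, P t != pI.
  apply/existsP; apply: contraNT P1 => /existsPn PI.
  by apply/eqP/ffunP=> t; rewrite ffunE; exact/eqP/negbNE/PI.
by rewrite (bigD1 t) //= (negbTE Pt) !mul0r.
Qed.

Lemma pmat_adj P : adj (pmat C P) = pmat C P.
Proof.
apply/matrixP=> i j; rewrite !mxE rmorph_prod.
by apply: eq_bigr => t _; exact: sigma_conj.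
Qed.

Lemma pmat_pid : pmat C (pid m) = 1%:M.
Proof.
apply/matrixP=> i j; rewrite pmatE mxE /pent.
under eq_bigr do rewrite ffunE.
rewrite -(inj_eq enum_val_inj); move: (enum_val i) (enum_val j) => x y.
have [->|xy] := eqVneq x y; first by rewrite big1 // => t _; rewrite /= eqxx.
have [t xyt] : exists t, x t != y t.
  apply/existsP; apply: contraNT xy => /existsPn xy.
  by apply/eqP/ffunP=> t; exact/eqP/negbNE/xy.
by rewrite (bigD1 t) //= (negbTE xyt) mul0r.
Qed.

Lemma normr_pauli_phase P Q : `|pauli_phase P Q| = 1.
Proof. by rewrite normr_prod big1 // => t _; rewrite normr_sigma_phase. Qed.

Lemma pauli_phaseC P Q : pauli_phase P Q = (-1) ^+ anticomm P Q * pauli_phase Q P.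
Proof.
rewrite /pauli_phase anticommE.
have signE (F : 'I_m -> bool) :
    \prod_t (-1) ^+ F t = (-1) ^+ (\big[addb/false]_t F t) :> C.
  by elim/big_rec2: _ => // t x b _ ->; rewrite signr_addb.
by rewrite -signE -big_split /=; apply: eq_bigr => t _; rewrite sigma_phaseC.
Qed.

Lemma pmat_comm P Q :
  pmat C P *m pmat C Q = (-1) ^+ anticomm P Q *: (pmat C Q *m pmat C P).
Proof. by rewrite !pmatM scalerA -pauli_phaseC pmulC. Qed.

End PauliMatrices.

Section Adjoint.
Variable C : numClosedFieldType.

Lemma adjB p q (A B : 'M[C]_(p, q)) : adj (A - B) = adj A - adj B.
Proof. by apply/matrixP=> i j; rewrite !mxE rmorphB. Qed.

HB.instance Definition _ p q := GRing.isZmodMorphism.Build _ _ (@adj C p q) (@adjB p q).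

Lemma adjM p q r (A : 'M[C]_(p, q)) (B : 'M[C]_(q, r)) : adj (A *m B) = adj B *m adj A.
Proof. by rewrite /adj trmx_mul map_mxM. Qed.

Lemma adjZ p q (w : C) (A : 'M[C]_(p, q)) : adj (w *: A) = w^* *: adj A.
Proof. by rewrite /adj linearZ /= map_mxZ. Qed.

Lemma adjK p q (A : 'M[C]_(p, q)) : adj (adj A) = A.
Proof. by apply/matrixP=> i j; rewrite !mxE conjCK. Qed.

Lemma mxtrace_adjmul_eq0 p q (A : 'M[C]_(p, q)) : \tr (adj A *m A) = 0 -> A = 0.
Proof.
have trE : \tr (adj A *m A) = \sum_i \sum_j `|A j i| ^+ 2.
  by apply: eq_bigr => i _; rewrite mxE; apply: eq_bigr => j _; rewrite !mxE normCKC.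
rewrite trE => tr0; apply/matrixP=> j i; rewrite mxE.
have col0 : \sum_j `|A j i| ^+ 2 = 0.
  by apply: (psumr_eq0P _ tr0) => // i' _; apply: sumr_ge0 => j' _; rewrite exprn_ge0.
have : `|A j i| ^+ 2 = 0 by apply: (psumr_eq0P _ col0) => // j' _; rewrite exprn_ge0.
by move/eqP; rewrite sqrf_eq0 normr_eq0 => /eqP.
Qed.

Variable m : nat.
Implicit Types (A B : 'M[C]_(#|qb m|)) (P Q : pauli m).

Definition phased_pauli A P : Prop := exists2 w : C, `|w| = 1 & A = w *: pmat C P.

Lemma phased_pmat P : phased_pauli (pmat C P) P.
Proof. by exists 1; rewrite ?normr1 ?scale1r. Qed.

Lemma phased_smat (bP : bool * pauli m) : phased_pauli (smat C bP) bP.2.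
Proof. by exists ((-1) ^+ bP.1); rewrite // normrX normrN1 expr1n. Qed.

Lemma phased_1 : phased_pauli 1%:M (pid m).
Proof. by rewrite -(pmat_pid C); exact: phased_pmat. Qed.

Lemma phased_mul A B P Q :
  phased_pauli A P -> phased_pauli B Q -> phased_pauli (A *m B) (pmul P Q).
Proof.
move=> [w w1 ->] [w' w'1 ->]; exists (w * w' * pauli_phase C P Q).
  by rewrite !normrM w1 w'1 normr_pauli_phase !mul1r.
by rewrite -scalemxAl -scalemxAr pmatM !scalerA.
Qed.

Lemma phased_adj A P : phased_pauli A P -> phased_pauli (adj A) P.
Proof.
by move=> [w w1 ->]; exists w^*; rewrite ?norm_conjC // adjZ pmat_adj.
Qed.

Lemma phased_tr_eq0 A P : phased_pauli A P -> P != pid m -> \tr A = 0.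
Proof. by move=> [w _ ->] /negbTE P1; rewrite mxtraceZ pmat_tr P1 mul0r mulr0. Qed.

Lemma phased_normr_tr A : phased_pauli A (pid m) -> `|\tr A| = 2%:R ^+ m.
Proof.
move=> [w w1 ->]; rewrite mxtraceZ pmat_tr eqxx mul1r normrM w1 mul1r.
by rewrite normrX normr_nat.
Qed.

Lemma phased_tr_adjmul_eq0 A B P Q :
  phased_pauli A P -> phased_pauli B Q -> P != Q -> \tr (adj A *m B) = 0.
Proof.
move=> PA QB PQ; apply: (@phased_tr_eq0 _ (pmul P Q)); last by rewrite pmul_eq_pid.
by apply: phased_mul => //; exact: phased_adj.
Qed.

Lemma phased_tr_adjmul A P : phased_pauli A P -> \tr (adj A *m A) = 2%:R ^+ m.
Proof.
move=> [w w1 ->]; rewrite adjZ pmat_adj -scalemxAl -scalemxAr pmatM.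
rewrite pmulpp pmat_pid !mxtraceZ mxtrace1 card_qb mulrA -normCKC w1 expr1n mul1r.
suff -> : pauli_phase C P P = 1 by rewrite mul1r.
by rewrite /pauli_phase big1 // => t _; case: (P t) => [[] []].
Qed.

End Adjoint.

(** * The stabilizer group S and the syndrome projectors *)

Lemma scalemx_prod (C : comPzRingType) d (I : finType) (a : C) (F : I -> 'M[C]_d) :
  \prod_j (a *: F j) = a ^+ #|I| *: \prod_j F j.
Proof.
rewrite -prodr_const; elim/big_rec3: _ => [|j M x M' _ ->]; first by rewrite scale1r.
by rewrite -!mulmxE -scalemxAl -scalemxAr scalerA.
Qed.

Section Stabilizer.
Variable C : numClosedFieldType.
Variables (n k c : nat) (gp : 'I_(n - k) -> bool * pauli n) (hp : 'I_c -> bool * pauli n).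

Local Notation gidx := (gidx n k c).
Local Notation qbmx := 'M[C]_(#|qb (n + c)|).

Definition synd0 : synd n k c := [ffun => false].

Definition stabmx (j : gidx) : qbmx := smat C (S_gen gp hp j).

Lemma anticomm_S_gen E j :
  anticomm (pcat E (pid c)) (S_gen gp hp j).2 = anticomm E (Sp_gen gp hp j).2.
Proof. by case: j => i /=; rewrite anticomm_pcat anticomm_pidl addbF. Qed.

Lemma stabmx_pmat (P : pauli (n + c)) j :
  stabmx j *m pmat C P = (-1) ^+ anticomm P (S_gen gp hp j).2 *: (pmat C P *m stabmx j).
Proof.
rewrite /stabmx /smat -scalemxAl -scalemxAr pmat_comm anticommC !scalerA.
by rewrite mulrC.
Qed.

Lemma half_sign_add1 (b : bool) : 2%:R^-1 * (1 + (-1) ^+ b) = (~~ b)%:R :> C.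
Proof.
by case: b; rewrite /= ?expr1 ?subrr ?mulr0 // expr0 -[1 + 1]/(2%:R) mulVf ?pnatr_eq0.
Qed.

Lemma synproj_eigen q (Y : 'M[C]_(#|qb (n + c)|, q)) (b : synd n k c) :
  (forall j, stabmx j *m Y = (-1) ^+ b j *: Y) ->
  forall s, synproj C gp hp s *m Y = (s == b)%:R *: Y.
Proof.
move=> eigY s.
transitivity ((\prod_j ((s j == b j)%:R : C)) *: Y).
  rewrite /synproj; elim/big_rec2: _ => [|j M x _ IH]; first by rewrite mul1mx scale1r.
  have factorY : 2%:R^-1 *: (1%:M + (-1) ^+ s j *: stabmx j) *m Y = (s j == b j)%:R *: Y.
    rewrite -scalemxAl mulmxDl mul1mx -scalemxAl eigY scalerA -signr_addb.
    rewrite -{1}[Y]scale1r -scalerDl scalerA half_sign_add1.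
    by case: (s j); case: (b j).
  by rewrite -mulmxA IH -scalemxAr factorY scalerA mulrC.
congr (_ *: _); have [->|sb] := eqVneq s b; first by rewrite big1 // => j _; rewrite eqxx.
have [j sbj] : exists j, s j != b j.
  apply/existsP; apply: contraNT sb => /existsPn sb.
  by apply/eqP/ffunP=> j; exact/eqP/negbNE/sb.
by rewrite (bigD1 j) //= (negbTE sbj) mul0r.
Qed.

Definition stab_elt (f : {ffun gidx -> bool}) : qbmx :=
  \prod_j (if f j then stabmx j else 1).
Definition stab_pauli (f : {ffun gidx -> bool}) : pauli (n + c) :=
  \big[@pmul _/pid _]_j (if f j then (S_gen gp hp j).2 else pid _).

Lemma phased_stab_elt f : phased_pauli (stab_elt f) (stab_pauli f).
Proof.
rewrite /stab_elt /stab_pauli.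
elim/big_rec2: _ => [|j M P _ MP]; first by rewrite -idmxE; exact: phased_1.
case: (f j); last by rewrite mul1r pmul1p.
by rewrite -mulmxE; apply: phased_mul => //; exact: phased_smat.
Qed.

Lemma synproj0E :
  synproj C gp hp synd0 = (2%:R^-1) ^+ #|gidx| *: \sum_f stab_elt f.
Proof.
rewrite /synproj mulmxE idmxE.
transitivity (\prod_j ((2%:R^-1 : C) *: (1 + stabmx j))).
  by apply: eq_bigr => j _; rewrite ffunE expr0 scale1r.
rewrite scalemx_prod; congr (_ *: _).
transitivity (\prod_j \sum_(b : bool) (if b then stabmx j else 1)).
  by apply: eq_bigr => j _; rewrite big_bool /= addrC.
by rewrite bigA_distr_bigA.
Qed.

Definition bob_gen (j : gidx) : pauli c :=
  match j with
  | inl i => [ffun b : 'I_c => if val b == val i then pZ else pI]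
  | inr i => bob1 i pX
  end.

Definition stab_alice (f : {ffun gidx -> bool}) : pauli n :=
  \big[@pmul _/pid _]_j (if f j then (Sp_gen gp hp j).2 else pid _).
Definition stab_bob (f : {ffun gidx -> bool}) : pauli c :=
  \big[@pmul _/pid _]_j (if f j then bob_gen j else pid _).

Lemma stab_pauliE f : stab_pauli f = pcat (stab_alice f) (stab_bob f).
Proof.
rewrite /stab_pauli -pcat_bigpmul; apply: eq_bigr => j _.
by case: j => i; case: (f _); rewrite ?pcat_pid.
Qed.

Hypothesis gen_indep : forall (A : {set 'I_(n - k)}) (B : {set 'I_c}),
  pmul (pprod (fun i => (gp i).2) A) (pprod (fun j => (hp j).2) B) = pid n ->
  A = set0 /\ B = set0.

Lemma stab_alice_eq_pid f : stab_alice f = pid n -> f = synd0.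
Proof.
rewrite /stab_alice big_sumType /= -!pprod_mkcond => /gen_indep [A0 B0].
apply/ffunP => -[i|i]; rewrite ffunE.
  by move/setP/(_ i): A0; rewrite !inE => /negbT/negbTE.
by move/setP/(_ i): B0; rewrite !inE => /negbT/negbTE.
Qed.

(* Independence is already visible on Alice's half of S. *)
Lemma stab_pauli_inj : injective stab_pauli.
Proof.
move=> f f' ff'.
pose fx : {ffun gidx -> bool} := [ffun j => f j (+) f' j].
have fxE : stab_pauli fx = pmul (stab_pauli f) (stab_pauli f').
  rewrite /stab_pauli -big_split; apply: eq_bigr => j _; rewrite ffunE.
  by case: (f j); case: (f' j); rewrite /= ?pmulpp ?pmul1p ?pmulp1.
rewrite ff' pmulpp -pcat_pid stab_pauliE in fxE.
have [/stab_alice_eq_pid fx0 _] := pcat_inj fxE.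
apply/ffunP => j; move/ffunP/(_ j): fx0; rewrite !ffunE.
by case: (f j); case: (f' j).
Qed.

End Stabilizer.

(** * The code space *)

Section Embedding.
Variables (C : numClosedFieldType) (k r : nat).

Lemma projA_emb (a : qb r) : projA C k a *m emb C k r = (a == qzero r)%:R *: 1%:M.
Proof.
apply/matrixP=> i j; rewrite !mxE.
under eq_bigr do rewrite !mxE.
rewrite (sum_enum_val (fun x : In k r => ((x.1 == enum_val i) && (x.2 == a))%:R *
   ((x.1 == enum_val j) && (x.2 == qzero r))%:R)).
rewrite (bigD1 (enum_val i, a)) //= big1 => [|[x1 x2] x12]; last first.
  by move: x12; rewrite /= xpair_eqE; case: (x1 == _); case: (x2 == a); rewrite ?mul0r.
rewrite !eqxx mul1r addr0 (inj_eq enum_val_inj).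
by case: (i == j); case: (a == qzero r); rewrite /= ?andbF ?mulr1 ?mulr0.
Qed.

Lemma adj_emb_mul : adj (emb C k r) *m emb C k r = 1%:M.
Proof.
apply/matrixP=> i j; rewrite !mxE.
under eq_bigr do rewrite !mxE conjC_nat.
rewrite (sum_enum_val (fun x : In k r => ((x.1 == enum_val i) && (x.2 == qzero r))%:R *
   ((x.1 == enum_val j) && (x.2 == qzero r))%:R)).
rewrite (bigD1 (enum_val i, qzero r)) //= big1 => [|[x1 x2] x12]; last first.
  by move: x12; rewrite /= xpair_eqE; case: (x1 == _); case: (x2 == _); rewrite ?mul0r.
by rewrite !eqxx mul1r addr0 (inj_eq enum_val_inj) andbT.
Qed.

End Embedding.

Section CodeSpace.
Variable C : numClosedFieldType.
Variables (n k c : nat) (gp : 'I_(n - k) -> bool * pauli n) (hp : 'I_c -> bool * pauli n)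
  (U : 'M[C]_(#|qb (n + c)|, #|In k (n - k + c)|)).
Hypothesis k_le_n : (k <= n)%N.
Hypothesis gen_indep : forall (A : {set 'I_(n - k)}) (B : {set 'I_c}),
  pmul (pprod (fun i => (gp i).2) A) (pprod (fun j => (hp j).2) B) = pid n ->
  A = set0 /\ B = set0.
Hypothesis U_unitary : unitary U.
Hypothesis S_stabilizes : forall j : gidx n k c,
  smat C (S_gen gp hp j) *m (U *m emb C k (n - k + c)) = U *m emb C k (n - k + c).

Definition encoder := U *m emb C k (n - k + c).
Local Notation V := encoder.
Local Notation P0 := (synproj C gp hp (synd0 n k c)).
Local Notation stab_phased := (phased_stab_elt C gp hp).

Let card_gidx : #|gidx n k c| = (n - k + c)%N.
Proof. by rewrite card_sum !card_ord. Qed.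

Let two_pow_nc : 2%:R ^+ (n + c) = 2%:R ^+ (n - k + c) * 2%:R ^+ k :> C.
Proof. by rewrite -exprD addnAC subnK. Qed.

Let two_pow_neq0 : 2%:R ^+ (n - k + c) != 0 :> C.
Proof. by rewrite expf_neq0 ?pnatr_eq0. Qed.

Lemma adj_encoder_mul : adj V *m V = 1%:M.
Proof. by rewrite /encoder adjM -mulmxA (mulmxA (adj U)) U_unitary.1 mul1mx adj_emb_mul. Qed.

Lemma adjU_encoder : adj U *m V = emb C k (n - k + c).
Proof. by rewrite /encoder mulmxA U_unitary.1 mul1mx. Qed.

Lemma synproj0_encoder : P0 *m V = V.
Proof.
rewrite (synproj_eigen (b := synd0 n k c)) ?eqxx ?scale1r // => j.
by rewrite ffunE expr0 scale1r; exact: S_stabilizes.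
Qed.

(* The 2^(n-k+c) summands of P_0 are pairwise Hilbert-Schmidt orthogonal, each of
   squared norm 2^(n+c), so ||P_0||^2 = 2^-2(n-k+c) 2^(n-k+c) 2^(n+c) = 2^k. *)
Lemma tr_adj_synproj0 : \tr (adj P0 *m P0) = 2%:R ^+ k.
Proof.
rewrite synproj0E adjZ raddf_sum -scalemxAl -scalemxAr mulmx_suml !mxtraceZ raddf_sum /=.
under eq_bigr => f _ do rewrite mulmx_sumr raddf_sum /=.
transitivity (((2%:R^-1 : C) ^+ #|gidx n k c|)^* *
  ((2%:R^-1) ^+ #|gidx n k c| * \sum_(f : {ffun gidx n k c -> bool}) 2%:R ^+ (n + c))).
  congr (_ * (_ * _)); apply: eq_bigr => f _.
  rewrite (bigD1 f) //= big1 ?addr0; first exact: phased_tr_adjmul (stab_phased f).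
  move=> f' f'f; apply: (phased_tr_adjmul_eq0 (stab_phased f) (stab_phased f')).
  by apply: contra f'f => /eqP /(stab_pauli_inj gen_indep) ->.
rewrite sumr_const card_ffun card_bool card_gidx -[_ *+ (2 ^ _)%N]mulr_natr natrX.
rewrite conj_Creal ?rpredX ?rpredV ?realn // two_pow_nc exprVn.
by field.
Qed.

(* Since P_0 V = V and V is an isometry, ||P_0 - V V^dag||^2 = 2^k - 2^k - 2^k + 2^k. *)
Lemma synproj0E_encoder : P0 = V *m adj V.
Proof.
apply/eqP; rewrite -subr_eq0; apply/eqP; apply: mxtrace_adjmul_eq0.
have adjVV : adj (V *m adj V) = V *m adj V by rewrite adjM adjK.
rewrite adjB adjVV mulmxBl !mulmxBr !raddfB /=.
have trPV : \tr (adj P0 *m (V *m adj V)) = 2%:R ^+ k.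
  rewrite mulmxA mxtrace_mulC mulmxA -adjM synproj0_encoder adj_encoder_mul.
  by rewrite mxtrace1 card_qb.
have trVP : \tr (V *m adj V *m P0) = 2%:R ^+ k.
  rewrite -mulmxA mxtrace_mulC -mulmxA synproj0_encoder adj_encoder_mul.
  by rewrite mxtrace1 card_qb.
have trVV : \tr (V *m adj V *m (V *m adj V)) = 2%:R ^+ k.
  rewrite mulmxA -(mulmxA V) adj_encoder_mul mulmx1 mxtrace_mulC adj_encoder_mul.
  by rewrite mxtrace1 card_qb.
by rewrite tr_adj_synproj0 trPV trVP trVV !subrr addr0.
Qed.

Lemma normr_tr_synproj0 (Q : 'M[C]_(#|qb (n + c)|)) P : phased_pauli Q P ->
  `|\tr (Q *m P0)| = [exists f, stab_pauli gp hp f == P]%:R * 2%:R ^+ k.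
Proof.
move=> QP; rewrite synproj0E -scalemxAr mulmx_sumr mxtraceZ raddf_sum /=.
have trQS f : stab_pauli gp hp f != P -> \tr (Q *m stab_elt C gp hp f) = 0.
  move=> fP; apply: (phased_tr_eq0 (phased_mul QP (stab_phased f))).
  by rewrite pmul_eq_pid eq_sym.
case: existsP => [[f0 /eqP f0P]|noP]; last first.
  rewrite big1 ?mulr0 ?normr0 ?mul0r // => f _; apply: trQS.
  by apply/eqP => fP; apply: noP; exists f; rewrite fP.
rewrite (bigD1 f0) //= big1 ?addr0 => [|f ff0]; last first.
  apply: trQS; apply: contra ff0 => /eqP fP.
  by apply/eqP/(stab_pauli_inj gen_indep); rewrite fP f0P.
rewrite normrM; have := phased_mul QP (stab_phased f0).
rewrite f0P pmulpp => /phased_normr_tr ->.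
rewrite normrX normfV normr_nat card_gidx two_pow_nc mul1r exprVn.
by field.
Qed.

End CodeSpace.

(** * The isotropic subgroup and the set T x S_I *)

Section Isotropic.
Variables (n k c : nat) (gp : 'I_(n - k) -> bool * pauli n) (hp : 'I_c -> bool * pauli n).
Hypothesis c_le : (c <= n - k)%N.
Hypothesis gg_comm : forall i j : 'I_(n - k), ~~ anticomm (gp i).2 (gp j).2.
Hypothesis gh_anticomm : forall (i : 'I_(n - k)) (j : 'I_c),
  anticomm (gp i).2 (hp j).2 = (val i == val j).

Lemma syndromeM P Q :
  syndrome gp hp (pmul P Q) = [ffun j => syndrome gp hp P j (+) syndrome gp hp Q j].
Proof. by apply/ffunP=> j; rewrite !ffunE anticommMl. Qed.

Lemma syndrome_S_I g : g \in S_I c gp -> syndrome gp hp g = synd0 n k c.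
Proof.
case/imsetP => J; rewrite inE => /forallP cJ ->.
apply/ffunP => j; rewrite !ffunE anticomm_pprod big1 // => i iJ.
have := cJ i; rewrite iJ /= => ci.
case: j => [i'|j] /=; first exact/negbTE/gg_comm.
by rewrite gh_anticomm; apply/negbTE; rewrite neq_ltn (leq_trans (ltn_ord j) ci) orbT.
Qed.

Let bob_genX (f : {ffun gidx n k c -> bool}) (b : 'I_c) (j : gidx n k c) :
  ((if f j then bob_gen j else pid c) b).1 = f j && (j == inr b).
Proof.
case: j => i; case: (f _); rewrite /= ?ffunE //=; first by case: ifP.
by rewrite eq_sym; case: ifP.
Qed.

Let bob_genZ (f : {ffun gidx n k c -> bool}) (b : 'I_c) (j : gidx n k c) :
  ((if f j then bob_gen j else pid c) b).2 = f j && (j == inl (widen_ord c_le b)).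
Proof.
case: j => i; case: (f _); rewrite /= ?ffunE //=; last by case: ifP.
have -> : (inl i == inl (widen_ord c_le b) :> gidx n k c) = (val b == val i).
  by apply/eqP/eqP => [[->]|bi] //; congr inl; apply/val_inj.
by case: ifP.
Qed.

(* Bob's qubit b carries X only in h'_b (x) X_b and Z only in g'_b (x) Z_b. *)
Lemma stab_bobE (f : {ffun gidx n k c -> bool}) (b : 'I_c) :
  stab_bob f b = (f (inr b), f (inl (widen_ord c_le b))).
Proof.
have pick j0 : \big[addb/false]_j (f j && (j == j0)) = f j0.
  by rewrite (bigD1 j0) //= eqxx andbT big1 ?addbF // => j /negbTE ->; rewrite andbF.
by rewrite bigpmulE (eq_bigr _ (fun j _ => bob_genX f b j))
  (eq_bigr _ (fun j _ => bob_genZ f b j)) !pick.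
Qed.

Lemma stab_alice_inl (f : {ffun gidx n k c -> bool}) :
  (forall j, f (inr j) = false) ->
  stab_alice gp hp f = pprod (fun i => (gp i).2) [set i | f (inl i)].
Proof.
move=> fr; rewrite /stab_alice big_sumType /= [X in pmul _ X]big1 ?pmulp1 ?pprod_mkcond //.
by move=> j _; rewrite fr.
Qed.

Lemma stab_pauli_pcat_pid F :
  [exists f, stab_pauli gp hp f == pcat F (pid c)] = (F \in S_I c gp).
Proof.
apply/existsP/imsetP => [[f /eqP]|[J]]; last first.
  rewrite inE => /forallP cJ ->.
  exists [ffun j => if j is inl i then i \in J else false]; apply/eqP.
  rewrite stab_pauliE stab_alice_inl => [|j]; last by rewrite ffunE.
  congr pcat; first by congr pprod; apply/setP => i; rewrite !inE ffunE.
  apply/ffunP => b; rewrite stab_bobE !ffunE; congr pair.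
  by apply: contraTF (ltn_ord b) => /(implyP (cJ _)); rewrite -leqNgt.
rewrite stab_pauliE => /pcat_inj [fF /ffunP fB].
have f0 b : f (inr b) = false /\ f (inl (widen_ord c_le b)) = false.
  by move: (fB b); rewrite stab_bobE ffunE => -[-> ->].
exists [set i | f (inl i)]; last by rewrite -fF stab_alice_inl // => b; case: (f0 b).
rewrite inE; apply/forallP => i; apply/implyP; rewrite inE.
apply: contraTT; rewrite -ltnNge => ic.
have wi : widen_ord c_le (Ordinal ic) = i by apply/val_inj.
by have [_] := f0 (Ordinal ic); rewrite wi => ->.
Qed.

Lemma mem_TxSI (Ef : synd n k c -> pauli n)
    (Ef_synd : forall s, syndrome gp hp (Ef s) = s) E :
  (E \in TxSI gp Ef) = (pmul (Ef (syndrome gp hp E)) E \in S_I c gp).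
Proof.
apply/imset2P/idP => [[h g /imsetP [s _ ->] g_SI ->]|EsE].
  rewrite syndromeM Ef_synd (syndrome_S_I g_SI).
  have -> : [ffun j => s j (+) synd0 n k c j] = s by apply/ffunP=> j; rewrite !ffunE addbF.
  by rewrite pmulA pmulpp pmul1p.
exists (Ef (syndrome gp hp E)) (pmul (Ef (syndrome gp hp E)) E) => //; first exact: imset_f.
by rewrite pmulA pmulpp pmul1p.
Qed.

End Isotropic.

Section Depolarizing.
Variables (C : numClosedFieldType) (n : nat) (p : C).

Lemma dep_w_ge0 a : 0 <= p -> p <= 1 -> 0 <= dep_w p a.
Proof.
move=> p_ge0 p_le1; rewrite /dep_w; case: (a == pI); last by rewrite divr_ge0 ?ler0n.
rewrite subr_ge0 (le_trans (ler_wpM2l _ p_le1)) ?divr_ge0 ?ler0n // mulr1.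
by rewrite ler_pdivrMr ?ltr0n // mul1r ler_nat.
Qed.

Lemma normr_dep_coef (E : pauli n) : 0 <= p -> p <= 1 ->
  `|\prod_i sqrtC (dep_w p (E i))| ^+ 2 = qw n p (weight E).
Proof.
move=> p_ge0 p_le1; rewrite normr_prod -prodrXl.
under eq_bigr => i _ do rewrite ger0_norm ?sqrtC_ge0 ?dep_w_ge0 // sqrtCK.
rewrite (bigID (fun i => E i == pI)) /= /qw.
have -> : \prod_(i | E i == pI) dep_w p (E i) =
    (1 - 3%:R / 4%:R * p) ^+ #|[set i | E i == pI]|.
  by rewrite -prodr_const; apply: eq_big => i; rewrite ?inE // /dep_w => ->.
have -> : \prod_(i | E i != pI) dep_w p (E i) = (p / 4%:R) ^+ weight E.
  by rewrite -prodr_const; apply: eq_big => i; rewrite ?inE // /dep_w => /negbTE ->.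
congr (_ ^+ _ * _); rewrite -[X in (X - _)%N](card_ord n) -(cardsC [set i | E i != pI]).
by rewrite addKn; apply: eq_card => i; rewrite !inE negbK.
Qed.

Lemma sum_weight_enumerator (A : {set pauli n}) :
  \sum_E (E \in A)%:R * qw n p (weight E) =
  \sum_(w < n.+1) #|[set P in A | weight P == w]|%:R * qw n p w.
Proof.
have weight_lt (P : pauli n) : (weight P < n.+1)%N.
  by rewrite ltnS (leq_trans (max_card _)) ?card_ord.
transitivity (\sum_(E in A) qw n p (weight E)).
  by rewrite [RHS]big_mkcond; apply: eq_bigr => E _; case: (E \in A); rewrite ?mul1r ?mul0r.
rewrite (partition_big (fun P => inord (weight P) : 'I_n.+1) predT) //=.
apply: eq_bigr => w _; rewrite -sum1_card natr_sum mulr_suml.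
apply: eq_big => P; first by rewrite inE -(inj_eq val_inj) /= inordK.
by case/andP => _ /eqP <-; rewrite mul1r inordK.
Qed.

End Depolarizing.

(** * Traces of the Kraus operators *)

Lemma sumr_triple (C : nmodType) (A B D : finType) (F : A * B * D -> C) :
  \sum_x F x = \sum_a \sum_b \sum_d F (a, b, d).
Proof.
rewrite (pair_bigA _ (fun a b => \sum_d F (a, b, d))) /=.
rewrite (pair_bigA _ (fun ab d => F (ab.1, ab.2, d))) /=.
by apply: eq_bigr => -[[a b] d].
Qed.

Arguments code_kraus : simpl never.

Section Kraus.
Variable C : numClosedFieldType.
Variables (n k c : nat) (p : C) (gp : 'I_(n - k) -> bool * pauli n)
  (hp : 'I_c -> bool * pauli n)
  (U : 'M[C]_(#|qb (n + c)|, #|In k (n - k + c)|)) (Ef : synd n k c -> pauli n).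
Hypothesis k_le_n : (k <= n)%N.
Hypothesis c_le : (c <= n - k)%N.
Hypothesis p_ge0 : 0 <= p.
Hypothesis p_le1 : p <= 1.
Hypothesis gg_comm : forall i j : 'I_(n - k), ~~ anticomm (gp i).2 (gp j).2.
Hypothesis gh_anticomm : forall (i : 'I_(n - k)) (j : 'I_c),
  anticomm (gp i).2 (hp j).2 = (val i == val j).
Hypothesis gen_indep : forall (A : {set 'I_(n - k)}) (B : {set 'I_c}),
  pmul (pprod (fun i => (gp i).2) A) (pprod (fun j => (hp j).2) B) = pid n ->
  A = set0 /\ B = set0.
Hypothesis U_unitary : unitary U.
Hypothesis S_stabilizes : forall j : gidx n k c,
  smat C (S_gen gp hp j) *m (U *m emb C k (n - k + c)) = U *m emb C k (n - k + c).
Hypothesis Ef_synd : forall s : synd n k c, syndrome gp hp (Ef s) = s.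

Local Notation V := (encoder U).
Local Notation PM E := (pmat C (pcat E (pid c))).
Local Notation P0 := (synproj C gp hp (synd0 n k c)).
Local Notation alpha E := (\prod_i sqrtC (dep_w p (E i))).

Lemma code_krausE E s a :
  code_kraus p gp hp U Ef (E, s, a) =
  alpha E *: (projA C k a *m adj U *m (PM (Ef s) *m (synproj C gp hp s *m (PM E *m V)))).
Proof. by rewrite /code_kraus /depAB /encoder -!mulmxA -scalemxAl -!scalemxAr. Qed.

Lemma stabmx_error_encoder E j :
  stabmx C gp hp j *m (PM E *m V) = (-1) ^+ syndrome gp hp E j *: (PM E *m V).
Proof.
rewrite mulmxA stabmx_pmat -scalemxAl -mulmxA S_stabilizes.
by rewrite anticomm_S_gen ffunE.
Qed.

Lemma synproj_error_encoder E s :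
  synproj C gp hp s *m (PM E *m V) = (s == syndrome gp hp E)%:R *: (PM E *m V).
Proof. exact/synproj_eigen/stabmx_error_encoder. Qed.

Lemma synproj0_corrected E :
  P0 *m (PM (Ef (syndrome gp hp E)) *m (PM E *m V)) =
  PM (Ef (syndrome gp hp E)) *m (PM E *m V).
Proof.
rewrite (synproj_eigen (b := synd0 n k c)) ?eqxx ?scale1r // => j.
rewrite mulmxA stabmx_pmat -scalemxAl -mulmxA stabmx_error_encoder -scalemxAr scalerA.
have /ffunP/(_ j) := Ef_synd (syndrome gp hp E); rewrite anticomm_S_gen ffunE => ->.
by rewrite -signr_addb addbb ffunE.
Qed.

Lemma tr_code_kraus E a :
  \tr (code_kraus p gp hp U Ef (E, syndrome gp hp E, a)) =
  alpha E * ((a == qzero _)%:R *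
    \tr (adj V *m (PM (Ef (syndrome gp hp E)) *m (PM E *m V)))).
Proof.
rewrite code_krausE synproj_error_encoder eqxx scale1r -[in LHS]synproj0_corrected.
rewrite (synproj0E_encoder k_le_n gen_indep U_unitary S_stabilizes) -mulmxA.
rewrite -(mulmxA V) (mulmxA (adj U)) (adjU_encoder U_unitary) mulmxA projA_emb.
by rewrite -scalemxAl mul1mx !mxtraceZ.
Qed.

Lemma normr_tr_corrected E :
  `|\tr (adj V *m (PM (Ef (syndrome gp hp E)) *m (PM E *m V)))| =
  (E \in TxSI gp Ef)%:R * 2%:R ^+ k.
Proof.
rewrite (mulmxA (PM _)) mxtrace_mulC -[_ *m V *m _]mulmxA.
rewrite -(synproj0E_encoder k_le_n gen_indep U_unitary S_stabilizes).
rewrite (normr_tr_synproj0 k_le_n gen_indep (phased_mul (phased_pmat _ _) (phased_pmat _ _))).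
by rewrite pcatM pmulpp (stab_pauli_pcat_pid gp hp c_le) (mem_TxSI gg_comm gh_anticomm Ef_synd).
Qed.

Lemma sum_tr_code_kraus E :
  \sum_s \sum_a `|\tr (code_kraus p gp hp U Ef (E, s, a))| ^+ 2 =
  qw n p (weight E) * (E \in TxSI gp Ef)%:R * (2%:R ^+ k) ^+ 2.
Proof.
rewrite (bigD1 (syndrome gp hp E)) //= [X in _ + X]big1 ?addr0 => [|s sE]; last first.
  apply: big1 => a _; rewrite code_krausE synproj_error_encoder (negbTE sE) scale0r.
  by rewrite !mulmx0 scaler0 linear0 normr0 expr0n.
rewrite (bigD1 (qzero _)) //= big1 ?addr0 => [|a /negbTE a0]; last first.
  by rewrite tr_code_kraus a0 mul0r mulr0 normr0 expr0n.
rewrite tr_code_kraus eqxx mul1r normrM exprMn normr_tr_corrected normr_dep_coef //.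
by rewrite exprMn mulrA; case: (E \in TxSI gp Ef); rewrite ?expr1n ?expr0n.
Qed.

End Kraus.

Theorem corollary1 (C : numClosedFieldType) (n k c : nat) (p : C)
    (gp : 'I_(n - k) -> bool * pauli n)   (* signed g'_1, ..., g'_{n-k} *)
    (hp : 'I_c -> bool * pauli n)         (* signed h'_1, ..., h'_c *)
    (U : 'M[C]_(#|qb (n + c)|, #|In k (n - k + c)|))   (* encoder U_E *)
    (Ef : synd n k c -> pauli n) :        (* s |-> E_s, so T = {E_s (x) I} *)
  (k <= n)%N -> (c <= n - k)%N ->
  0 <= p -> p <= 1 ->
  (* commutation relations of the generators of S' *)
  (forall i j : 'I_(n - k), ~~ anticomm (gp i).2 (gp j).2) ->
  (forall i j : 'I_c, ~~ anticomm (hp i).2 (hp j).2) ->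
  (forall (i : 'I_(n - k)) (j : 'I_c),
      anticomm (gp i).2 (hp j).2 = (val i == val j)) ->
  (* the n - k + c generators of S' are independent *)
  (forall (A : {set 'I_(n - k)}) (B : {set 'I_c}),
      pmul (pprod (fun i => (gp i).2) A) (pprod (fun j => (hp j).2) B) = pid n ->
      A = set0 /\ B = set0) ->
  (* U_E is a Clifford unitary and the encoded states are stabilized by S *)
  unitary U -> clifford U ->
  (forall j : gidx n k c,
      smat C (S_gen gp hp j) *m (U *m emb C k (n - k + c)) = U *m emb C k (n - k + c)) ->
  (* T: one representative of each syndrome, E_0 = I *)
  Ef [ffun => false] = pid n ->
  (forall s : synd n k c, syndrome gp hp (Ef s) = s) ->
  chan_fid (code_kraus p gp hp U Ef)
    = \sum_(w < n.+1) (bw gp Ef w)%:R * qw n p w.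
Proof.
move=> k_le_n c_le p_ge0 p_le1 gg_comm _ gh_anticomm gen_indep U_unitary _ S_stabilizes _.
move=> Ef_synd.
rewrite /chan_fid sumr_triple.
under eq_bigr do rewrite sum_tr_code_kraus //.
rewrite -mulr_suml mulrCA card_qb mulVf ?mulr1 ?expf_neq0 ?pnatr_eq0 //.
rewrite -sum_weight_enumerator; apply: eq_bigr => E _; exact: mulrC.
Qed.
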